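(* Let $b\ge 2$ and $n\ge 0$ be integers. Then $b\,s_{n+1}\notin \mathrm{Ap}(T_b(n),s_0)$.
   Context: For integers $b\ge 2$, $n\ge 0$, $i\ge0$ put $s_i=(b+1)b^{n+i}-1$ and $T_b(n)=\langle\{s_i:i\in\mathbb{N}\}\rangle$ (a numerical semigroup). For a numerical semigroup $S$ and $x\in S\setminus\{0\}$, $\mathrm{Ap}(S,x)=\{s\in S: s-x\notin S\}$. *)

From mathcomp Require Import all_boot.
Set Implicit Arguments. Unset Strict Implicit. Unset Printing Implicit Defensive.

Definition s (b n i : nat) : nat := (b + 1) * b ^ (n + i) - 1.

Inductive T (b n : nat) : nat -> Prop :=
  | T_zero : T b n 0
  | T_gen (i : nat) : T b n (s b n i)
  | T_add (x y : nat) : T b n x -> T b n y -> T b n (x + y).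

(* Ap(S, x) = { m in S : m - x notin S }, where m - x is the integer
   difference; for m < x it is negative, hence not in S. *)
Definition Ap (S : nat -> Prop) (x m : nat) : Prop :=
  S m /\ ~ (x <= m /\ S (m - x)).

(** With [P = b^n] one has [s_0 = (b+1)P - 1], [s_n = (b+1)P^2 - 1] and
    [b s_{n+1} = (b+1)b^2 P^2 - b], and a direct computation gives
    [b s_{n+1} = s_0 + s_n + ((b^2-1)P + b - 2) s_0].
    So [b s_{n+1} - s_0] is a nonnegative combination of generators. *)

From mathcomp Require Import all_boot all_algebra.
From mathcomp Require Import ring.
Import GRing.Theory.

Lemma T_muln (b n m x : nat) : T b n x -> T b n (m * x).
Proof.
move=> Tx; elim: m => [|m IHm]; first exact: T_zero.
by rewrite mulSn; apply: T_add.
Qed.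

Lemma not_Ap_addl (S : nat -> Prop) (x y : nat) : S y -> ~ Ap S x (x + y).
Proof. by move=> Sy [_]; apply; rewrite leq_addr addKn. Qed.

Lemma s_int (b n i : nat) : 1 <= b ->
  Posz (s b n i) = (Posz (b + 1) * Posz b ^+ (n + i) - 1)%R.
Proof.
move=> b_gt0; rewrite /s -subzn; last by rewrite muln_gt0 addn1 expn_gt0 b_gt0.
by rewrite PoszM -!natz natrX.
Qed.

Lemma mulb_s_succ (b n : nat) : 2 <= b ->
  b * s b n (n + 1) = s b n 0 + (s b n n + ((b ^ 2 - 1) * b ^ n + b - 2) * s b n 0).
Proof.
move=> b_ge2; have b_gt0 : 1 <= b by apply: ltnW.
have b2_ge1 : 1 <= b ^ 2 by rewrite expn_gt0 b_gt0.
have coef_ge2 : 2 <= (b ^ 2 - 1) * b ^ n + b by apply: leq_trans b_ge2 (leq_addl _ _).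
apply/eqP; rewrite -eqz_nat; apply/eqP.
rewrite !PoszD !PoszM -subzn // PoszD PoszM -subzn // !s_int // -!natz.
by rewrite !addn0 !exprD expr1 !natrX natrD; ring.
Qed.

Theorem mainTheorem9 (b n : nat) (hb : 2 <= b) :
  ~ Ap (T b n) (s b n 0) (b * s b n (n + 1)).
Proof.
rewrite mulb_s_succ //; apply: not_Ap_addl.
by apply: T_add; [exact: T_gen | exact/T_muln/T_gen].
Qed.
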